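(* Let $\mathcal{P}$ be a locally geometric poset of rank $r$ and write $\chi_{\mathcal{P}}(t)=c_rt^r+c_{r-1}t^{r-1}+\cdots+c_0$. Then $(-1)^{r-i}c_i>0$ for all $0\le i\le r$.
   Context: All posets are finite, have a unique minimal element $\hat0$ and are ranked (all maximal chains with top $x$ have the same length $\operatorname{rk}(x)$); $\operatorname{rk}(\mathcal{P})=\max_x\operatorname{rk}(x)$. $\chi_{\mathcal{P}}(t)=\sum_x\mu(\hat0,x)t^{\operatorname{rk}(\mathcal{P})-\operatorname{rk}(x)}$, $\mu$ the Möbius function. For $x,y$, $x\vee y$ is the set of minimal upper bounds. A lattice is geometric if for all $x,y$: $y$ covers $x$ iff there is an atom (rank-1 element) $a\not\le x$ with $y=x\vee a$. $\mathcal{P}$ is locally geometric if $\mathcal{P}_{\le x}$ is a geometric lattice for every $x\in\mathcal{P}$. *)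

From HB Require Import structures.
From mathcomp Require Import all_boot all_order all_algebra.
Set Implicit Arguments. Unset Strict Implicit. Unset Printing Implicit Defensive.
Import Order.Theory GRing.Theory.

(* Finite posets are finPOrderType's; the bottom element b is passed explicitly. *)
Section PosetDefs.
Context {d : Order.disp_t} {T : finPOrderType d}.
Local Open Scope order_scope.

Definition covers (x y : T) : bool :=
  (x < y) && [forall z : T, ~~ ((x < z) && (z < y))].

(* maximal chain b = x0 < x1 < ... < xk = x, listed as b :: s (length k = size s) *)
Definition sat_chain (b : T) (s : seq T) (x : T) : bool :=
  path covers b s && (last b s == x).

Definition ranked (b : T) : Prop :=
  forall x s1 s2, sat_chain b s1 x -> sat_chain b s2 x -> size s1 = size s2.

(* rank of x: the length of a maximal chain from b to x (all chains have length < #|T|) *)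
Definition rk (b x : T) : nat :=
  \max_(i < #|T|) (if [exists s : i.-tuple T, sat_chain b s x] then (i : nat) else 0%N).

Definition rankP (b : T) : nat := \max_(x : T) rk b x.

(* Moebius function, by the usual recursion mu(x,x)=1, mu(x,y) = - sum_{x<=z<y} mu(x,z);
   the fuel #|T| exceeds the length of any strict chain. *)
Fixpoint mobius_aux (n : nat) (x y : T) : int :=
  match n with
  | 0 => (x == y)%:Z
  | n'.+1 =>
      if x == y then 1%R
      else if x <= y then (- \sum_(z : T | ((x <= z) && (z < y))%O) mobius_aux n' x z)%R
      else 0%R
  end.

Definition mobius (x y : T) : int := mobius_aux #|T| x y.

Definition charpoly (b : T) : {poly int} :=
  (\sum_(x : T) (mobius b x)%:P * 'X^(rankP b - rk b x))%R.

Definition is_atom (b a : T) : bool := covers b a.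

Definition is_join_below (x y a z : T) : Prop :=
  [/\ z <= x, y <= z, a <= z & forall w, w <= x -> y <= w -> a <= w -> z <= w].

(* z is the meet of y and a (in P_{<= x}, which is down-closed) *)
Definition is_meet_below (y a z : T) : Prop :=
  [/\ z <= y, z <= a & forall w, w <= y -> w <= a -> w <= z].

Definition lattice_below (x : T) : Prop :=
  forall y z, y <= x -> z <= x ->
    (exists j, is_join_below x y z j) /\ (exists m, is_meet_below y z m).

(* atoms of P_{<= x} are atoms of P below x; covering in P_{<= x} is covering in P *)
Definition geometric_below (b x : T) : Prop :=
  lattice_below x /\
  forall y z, y <= x -> z <= x ->
    (covers y z <-> exists a, [/\ is_atom b a, a <= x, ~~ (a <= y) & is_join_below x y a z]).

Definition locally_geometric (b : T) : Prop := forall x, geometric_below b x.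

End PosetDefs.

(** The coefficient of [t^i] in the characteristic polynomial, multiplied by
    [(-1)^(r-i)], is the sum of [(-1)^rk x * mu(0, x)] over the elements [x] of
    rank [r - i], and such elements exist (truncate a maximal chain).  So it
    suffices that [mu(0, x)] strictly alternates in sign with the rank.  This
    follows by induction from Weisner's theorem: for an atom [a <= x],
    [sum_{x ∈ z ∨ a} mu(0, z) = 0].  Pick an atom [a] with [x ∈ z ∨ a] for some
    [z] covered by [x]; in a geometric lattice every [w <> x] with [x ∈ w ∨ a] is
    covered by [x], so [mu(0, x)] is minus a nonempty sum of terms of sign
    [(-1)^(rk x - 1)]. *)
From HB Require Import structures.
From mathcomp Require Import all_boot all_order all_algebra.
From mathcomp Require Import zify.
Import Order.Theory GRing.Theory Num.Theory.

Lemma psumr_gt0 {R : numDomainType} {I : finType} {P : pred I} {F : I -> R} (j : I) :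
  P j -> (forall i, P i -> 0 < F i)%R -> (0 < \sum_(i | P i) F i)%R.
Proof.
move=> Pj F_gt0; have F_ge0 i : P i -> (0 <= F i)%R by move/F_gt0/ltW.
rewrite lt_def sumr_ge0 // andbT psumr_neq0 //.
by apply/hasP; exists j; rewrite ?mem_index_enum ?Pj ?F_gt0.
Qed.

Section FinPOrder.
Context {d : Order.disp_t} {T : finPOrderType d}.
Local Open Scope order_scope.

Definition nbelow (y : T) : nat := #|[set w : T | w < y]|.

Lemma nbelow_lt {y z : T} : y < z -> (nbelow y < nbelow z)%N.
Proof.
move=> yz; apply: proper_card; apply/properP; split.
  by apply/subsetP => w; rewrite !inE => wy; apply: lt_trans yz.
by exists y; rewrite !inE ?yz ?ltxx.
Qed.

Lemma nbelow_ltcard (y : T) : (nbelow y < #|T|)%N.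
Proof.
rewrite -cardsT; apply: proper_card; rewrite properT.
by apply/eqP => /setP /(_ y); rewrite !inE ltxx.
Qed.

Lemma lt_ind (P : T -> Prop) :
  (forall x, (forall y, y < x -> P y) -> P x) -> forall x, P x.
Proof.
move=> IH x; elim: {x}(nbelow x).+1 {-2}x (ltnSn (nbelow x)) => // n IHn x hx.
by apply: IH => y /nbelow_lt yx; apply: IHn; exact: leq_trans yx hx.
Qed.

Lemma covered_of_lt {y x : T} : y < x -> exists z, covers z x.
Proof.
move=> yx; have Py : (y <= y) && (y < x) by rewrite lexx yx.
case: (@arg_maxnP _ y (fun z => (y <= z) && (z < x)) nbelow Py) => z /andP[yz zx] zmax.
exists z; rewrite /covers zx; apply/forallP => w; apply/negP => /andP[zw wx].
have := zmax w; rewrite (le_trans yz (ltW zw)) wx => /(_ isT) /= le_wz.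
by have := nbelow_lt zw; rewrite ltnNge le_wz.
Qed.

Lemma mobius_auxS (x : T) n y :
  (nbelow y <= n)%N -> mobius_aux n x y = mobius_aux n.+1 x y.
Proof.
elim: n y => [|n IH] y Hy /=.
  case: eqP => // nxy; case: ifP => // xy; exfalso.
  move: Hy; rewrite /nbelow leqn0 => /eqP /cards0_eq /setP /(_ x).
  by rewrite !inE lt_def xy andbT; case: eqP => // yx; case: nxy.
case: eqP => // _; case: ifP => // _; congr (- _)%R.
by apply: eq_bigr => z /andP[_ /nbelow_lt zy]; apply: IH; rewrite -ltnS (leq_trans zy).
Qed.

Lemma mobiusE (x y : T) : mobius x y =
  if x == y then 1%R
  else if x <= y then (- \sum_(z : T | ((x <= z) && (z < y))%O) mobius x z)%R
  else 0%R.
Proof.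
have [n eqn] : exists n, #|T| = n.+1.
  by exists #|T|.-1; rewrite prednK //; apply/card_gt0P; exists x.
rewrite /mobius eqn /=; case: eqP => // _; case: ifP => // _; congr (- _)%R.
by apply: eq_bigr => z _; rewrite mobius_auxS // -ltnS -eqn nbelow_ltcard.
Qed.

Lemma mobius_sum_interval {x y : T} : x < y ->
  (\sum_(z : T | ((x <= z) && (z <= y))%O) mobius x z = 0)%R.
Proof.
move=> xy; rewrite (bigD1 y) /=; last by rewrite ltW ?lexx.
rewrite mobiusE (lt_eqF xy) (ltW xy).
rewrite [X in (_ + X)%R](eq_bigl (fun z => (x <= z) && (z < y))) ?addNr // => z.
by rewrite lt_neqAle -andbA [(z <= y) && _]andbC.
Qed.

(* [min_ub z a y] means [y ∈ z ∨ a]. *)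
Definition min_ub (z a y : T) : bool := [&& z <= y, a <= y &
  [forall w, (w <= y) && (z <= w) && (a <= w) ==> (y <= w)]].

Lemma lattice_below_min_ub_unique {x z a : T} : lattice_below x -> z <= x -> a <= x ->
  exists j, forall y, (a <= y) && (y <= x) && min_ub z a y = (y == j).
Proof.
move=> hl zx ax; case: (hl z a zx ax) => [[j [jx zj aj jmin]] _].
exists j => y; apply/idP/eqP => [|->].
  case/andP => [/andP[ay yx] /and3P[zy _ /forallP ymin]].
  have jy := jmin y yx zy ay.
  by apply/le_anti; rewrite jy andbT; have := ymin j; rewrite jy zj aj; apply.
rewrite /min_ub aj jx zj /=; apply/forallP => w.
by apply/implyP => /andP[/andP[wj zw] aw]; exact: jmin w (le_trans wj jx) zw aw.
Qed.

End FinPOrder.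

Section Ranked.
Context {d : Order.disp_t} {T : finPOrderType d} {b : T}.
Local Open Scope order_scope.
Hypothesis b_min : forall x : T, b <= x.
Hypothesis b_ranked : ranked b.

Lemma bot_lt {x} : x != b -> b < x.
Proof. by move=> xb; rewrite lt_def xb b_min. Qed.

Lemma sat_chain_rcons {s w x} : sat_chain b s w -> covers w x -> sat_chain b (rcons s x) x.
Proof.
by case/andP => sw /eqP wE wx; rewrite /sat_chain rcons_path last_rcons eqxx sw wE wx.
Qed.

Lemma sat_chain_size {s x} : sat_chain b s x -> (size s < #|T|)%N.
Proof.
case/andP => sP _.
have sU : uniq (b :: s).
  by apply: (sorted_uniq lt_trans ltxx); apply: sub_path sP => u v /andP[].
by have := max_card (mem (b :: s)); rewrite (card_uniqP sU).
Qed.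

Lemma sat_chain_exists x : exists s, sat_chain b s x.
Proof.
move: x; apply: lt_ind => x IH; case: (eqVneq x b) => [->|xb].
  by exists [::]; rewrite /sat_chain /= eqxx.
have [z zx] := covered_of_lt (bot_lt xb).
have [s sz] := IH z (proj1 (andP zx)).
by exists (rcons s x); apply: sat_chain_rcons sz zx.
Qed.

Lemma rkE {s x} : sat_chain b s x -> rk b x = size s.
Proof.
move=> sx; apply/eqP; rewrite eqn_leq; apply/andP; split.
  apply/bigmax_leqP => i _; case: ifP => // /existsP [t tx].
  by rewrite -(size_tuple t) (b_ranked _ _ _ tx sx).
have sT := sat_chain_size sx.
apply: leq_trans (leq_bigmax (Ordinal sT)) => /=.
by case: ifP => // /negbT /negP []; apply/existsP; exists (in_tuple s).
Qed.

Lemma rk_covers {w x} : covers w x -> rk b x = (rk b w).+1.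
Proof.
move=> wx; have [s sw] := sat_chain_exists w.
by rewrite (rkE sw) (rkE (sat_chain_rcons sw wx)) size_rcons.
Qed.

Lemma rk_exists {k} : (k <= rankP b)%N -> exists x, rk b x = k.
Proof.
have [xm rkxm] : {xm | rankP b = rk b xm}.
  by apply: bigop.eq_bigmax; apply/card_gt0P; exists b.
have [s sxm] := sat_chain_exists xm.
rewrite rkxm (rkE sxm) => ks; set t := take k s.
have tP : sat_chain b t (last b t).
  rewrite /sat_chain eqxx andbT; case/andP: sxm => sP _.
  by move: sP; rewrite -(cat_take_drop k s) cat_path => /andP[].
by exists (last b t); rewrite (rkE tP) size_takel.
Qed.

End Ranked.

Section LocallyGeometric.
Context {d : Order.disp_t} {T : finPOrderType d} {b : T}.
Local Open Scope order_scope.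
Hypothesis b_min : forall x : T, b <= x.
Hypothesis b_ranked : ranked b.
Hypothesis b_geometric : locally_geometric b.

(* Summing [mobius_sum_interval] over the [y >= a] grouped as [y ∈ z ∨ a]
   isolates the term [y = x]; the others vanish by induction. *)
Lemma weisner {a x : T} : b < a -> a <= x ->
  (\sum_(z : T | min_ub z a x) mobius b z = 0)%R.
Proof.
move=> ba; move: x; apply: lt_ind => x IH ax.
have := mobius_sum_interval (lt_le_trans ba ax).
rewrite (eq_bigl (fun z => z <= x)) => [|z]; last by rewrite b_min.
have -> : (\sum_(z : T | (z <= x)%O) mobius b z =
    \sum_(y : T | ((a <= y) && (y <= x))%O) \sum_(z : T | min_ub z a y) mobius b z)%R.
  rewrite (exchange_big_dep (fun z => z <= x)) => [|y z /andP[_ yx] /and3P[zy _ _]];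
    last exact: le_trans zy yx.
  apply: eq_bigr => z zx.
  have [j jE] := lattice_below_min_ub_unique (proj1 (b_geometric x)) zx ax.
  by rewrite (eq_bigl (fun y => y == j)) // big_pred1_eq.
rewrite (bigD1 x) /=; last by rewrite ax lexx.
rewrite [X in (_ + X)%R]big1 ?addr0 // => y /andP[/andP[ay yx] yNx].
by apply: IH ay; rewrite lt_neqAle yNx yx.
Qed.

Lemma min_ub_covers {a w x : T} : is_atom b a -> a <= x -> min_ub w a x -> w != x ->
  covers w x.
Proof.
move=> ha ax /and3P[wx _ /forallP wmin] wNx.
have wax : forall v, v <= x -> w <= v -> a <= v -> x <= v.
  by move=> v vx wv av; have := wmin v; rewrite vx wv av; apply.
apply/((proj2 (b_geometric x)) w x wx (lexx x)); exists a; split => //.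
by apply: contra wNx => aw; rewrite eq_le wx wax.
Qed.

Lemma mobius_sign x : (0 < (-1) ^+ rk b x * mobius b x)%R.
Proof.
move: x; apply: lt_ind => x IH; case: (eqVneq x b) => [->|xb].
  by rewrite (@rkE _ _ _ b_ranked [::] b) ?/sat_chain ?eqxx // mobiusE eqxx mulr1.
have [z zx] := covered_of_lt (bot_lt b_min xb).
have zx_le : z <= x by case/andP: zx => /ltW.
have [a [ha ax aNz [_ _ _ zax]]] :=
  ((proj2 (b_geometric x)) z x zx_le (lexx x)).1 zx.
have xax : min_ub x a x.
  by rewrite /min_ub lexx ax; apply/forallP => w; apply/implyP => /andP[/andP[_ ->]].
have := weisner (proj1 (andP ha)) ax.
rewrite (bigD1 x) //= => /eqP; rewrite addr_eq0 => /eqP ->.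
rewrite mulrN -mulNr mulr_sumr; apply: (psumr_gt0 z) => [|w /andP[wax wNx]].
  rewrite /min_ub zx_le ax (lt_eqF (proj1 (andP zx))) andbT /=.
  by apply/forallP => w; apply/implyP => /andP[/andP[wx zw] aw]; apply: zax.
have wx := min_ub_covers ha ax wax wNx.
rewrite (rk_covers b_min b_ranked wx) exprS mulN1r opprK; apply: IH.
by case/andP: wx.
Qed.

End LocallyGeometric.

Lemma charpoly_coef_sign {d : Order.disp_t} {T : finPOrderType d} (b : T) i :
  (i <= rankP b)%N ->
  ((-1) ^+ (rankP b - i) * (charpoly b)`_i =
     \sum_(x : T | rk b x == (rankP b - i)%N) (-1) ^+ rk b x * mobius b x)%R.
Proof.
move=> ir; rewrite /charpoly coef_sum mulr_sumr [RHS]big_mkcond /=.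
apply: eq_bigr => x _; rewrite coefCM coefXn.
have rkx : (rk b x <= rankP b)%N by exact: leq_bigmax.
have -> : (i == rankP b - rk b x)%N = (rk b x == rankP b - i)%N.
  by apply/eqP/eqP => ?; lia.
by case: eqP => [->|_]; rewrite ?mulr1 ?mulr0.
Qed.

Theorem lemma3p4 (d : Order.disp_t) (T : finPOrderType d) (b : T) (r : nat) :
  (forall x : T, (b <= x)%O) ->
  ranked b ->
  locally_geometric b ->
  rankP b = r ->
  forall i : nat, (i <= r)%N ->
    (0 < (-1) ^+ (r - i) * (charpoly b)`_i)%R.
Proof.
move=> b_min b_ranked b_geometric <- i ir.
have [x rkx] := rk_exists b_min b_ranked (leq_subr i (rankP b)).
rewrite charpoly_coef_sign //; apply: (psumr_gt0 x) => [|y _]; first by rewrite rkx.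
exact: mobius_sign.
Qed.
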